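(* Let $g_y(\omega)=\frac{\sigma_\epsilon^2}{2\pi}|\kappa(e^{i\omega})|^2$, $-\pi\le\omega\le\pi$, where $\sigma_\epsilon^2>0$ and $\kappa(z)=\sum_{s\ge0}\kappa_sz^s$ with $\kappa_0=1$, $\sum_s|\kappa_s|<\infty$ and $\kappa(z)\ne0$ for $|z|\le1$, so that $0<m\le g_y(\omega)\le M<\infty$ for all $\omega$, for some constants $m,M$. For $\beta\in[0,1]$ and $\theta\in\Theta=(-1,1)$ let $$f(\theta,\beta)=-\int_{-\pi}^{\pi}\frac{e^{i\omega}+\beta\theta}{|(1+\theta e^{i\omega})(1+\beta\theta e^{i\omega})|^2}\,g_y(\omega)\,d\omega,\qquad \bar L(\theta)=\int_{-\pi}^{\pi}\frac{g_y(\omega)}{|1+\theta e^{i\omega}|^2}\,d\omega .$$ Then for each $\beta\in[0,1]$, $f(\cdot,\beta)$ is infinitely differentiable on $\Theta$, and $\Theta_0^\beta=\{\theta\in\Theta: f(\theta,\beta)=0\}$ is a nonempty compact subset of $\Theta$. In the case $\beta=1$, $\Theta_0^1$ contains the (nonempty) set of minimizers of $\bar L$ over $\Theta$. *)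

From Stdlib Require Import Reals Rtopology.
From Coquelicot Require Import Coquelicot.
Open Scope R_scope.

Definition cis (w : R) : C := (cos w, sin w).

Definition RIntC (h : R -> C) (a b : R) : C :=
  (RInt (fun x => Re (h x)) a b, RInt (fun x => Im (h x)) a b).

Definition kappa_fun (kappa : nat -> R) (z : C) : C :=
  (Series (fun s => Re (RtoC (kappa s) * Cpow z s)%C),
   Series (fun s => Im (RtoC (kappa s) * Cpow z s)%C)).

Definition g_y (sigma2 : R) (kappa : nat -> R) (w : R) : R :=
  sigma2 / (2 * PI) * (Cmod (kappa_fun kappa (cis w))) ^ 2.

Definition f_est (sigma2 : R) (kappa : nat -> R) (theta beta : R) : C :=
  Copp (RIntC (fun w =>
    Cmult (Cdiv (Cplus (cis w) (RtoC (beta * theta)))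
                (RtoC ((Cmod (Cmult (Cplus (RtoC 1) (Cmult (RtoC theta) (cis w)))
                                     (Cplus (RtoC 1) (Cmult (RtoC (beta * theta)) (cis w))))) ^ 2)))
          (RtoC (g_y sigma2 kappa w)))
    (- PI) PI).

Definition Lbar (sigma2 : R) (kappa : nat -> R) (theta : R) : R :=
  RInt (fun w => g_y sigma2 kappa w /
                 (Cmod (Cplus (RtoC 1) (Cmult (RtoC theta) (cis w)))) ^ 2) (- PI) PI.

Definition in_Theta (theta : R) : Prop := -1 < theta < 1.

Definition Theta0 (sigma2 : R) (kappa : nat -> R) (beta : R) : R -> Prop :=
  fun theta => in_Theta theta /\ f_est sigma2 kappa theta beta = RtoC 0.

Definition smooth_on_Theta (h : R -> C) : Prop :=
  forall (n : nat) (theta : R), in_Theta theta ->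
    ex_derive_n (fun t => Re (h t)) n theta /\ ex_derive_n (fun t => Im (h t)) n theta.

(* The imaginary part of f(., beta) vanishes, its integrand being odd in omega, and the
   real part is a parametric integral of an integrand that is smooth in theta, hence
   smooth on Theta.  Writing the real part as - int kernel(theta, cos omega) g_y(omega),
   the kernel at theta = 1 - eps is of order -eps^-2 (-eps^-3 when beta = 1) on a window
   of width eps around omega = pi, while its positive part stays of order 1 (eps^-3/2
   when beta = 1); as m <= g_y <= M, the window wins and f(., beta) > 0 near theta = 1,
   and symmetrically f(., beta) < 0 near theta = -1.  So the zeros of f(., beta) form a
   closed subset of a compact subinterval of Theta, and the intermediate value theorem
   provides one.  Likewise Lbar(+-(1 - eps)) >= m / (2 eps), so Lbar attains its
   minimum on Theta, and Lbar' = 2 Re f(., 1) vanishes there. *)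

From Stdlib Require Import Reals Rtopology Ranalysis5 Lra.
From Coquelicot Require Import Coquelicot.
Open Scope R_scope.

(** * Smoothness of parametric integrals *)

Definition partial_param (φ : R -> R -> R) (u v : R) : R := Derive (fun z => φ z v) u.

Lemma continuous_of_continuity_2d_pt (φ : R -> R -> R) (u v : R) :
  continuity_2d_pt φ u v -> continuous (φ u) v.
Proof.
  intros H. apply continuity_pt_filterlim, continuity_pt_locally. intros eps.
  destruct (H eps) as [d Hd]. exists d. intros w Hw. apply Hd; [|exact Hw].
  rewrite Rminus_eq_0, Rabs_R0. apply cond_pos.
Qed.

Section ParametricSmoothness.

Variable U : R -> Prop.
Hypothesis U_open : open U.

Definition jointly_continuous_on (φ : R -> R -> R) : Prop :=
  forall θ w, U θ -> continuity_2d_pt φ θ w.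

(* Joint continuity in (parameter, variable) is what differentiation under the integral
   sign requires at each order. *)
Fixpoint Cn_param (n : nat) (φ : R -> R -> R) : Prop :=
  match n with
  | O => jointly_continuous_on φ
  | S n => jointly_continuous_on φ /\ (forall θ w, U θ -> ex_derive (fun t => φ t w) θ) /\
           Cn_param n (partial_param φ)
  end.

Definition Cinf_param (φ : R -> R -> R) : Prop := forall n, Cn_param n φ.

Lemma jointly_continuous_on_ext φ χ :
  (forall θ w, U θ -> φ θ w = χ θ w) -> jointly_continuous_on φ -> jointly_continuous_on χ.
Proof.
  intros E H θ w Hθ. apply continuity_2d_pt_ext_loc with φ; [|now apply H].
  destruct (U_open θ Hθ) as [d Hd]. exists d. intros u v Hu _. now apply E, Hd.
Qed.

Lemma partial_param_ext φ χ θ w :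
  (forall θ w, U θ -> φ θ w = χ θ w) -> U θ -> partial_param φ θ w = partial_param χ θ w.
Proof.
  intros E Hθ. apply Derive_ext_loc. generalize (U_open θ Hθ); apply filter_imp.
  intros t Ht. now apply E.
Qed.

Lemma Cn_param_ext n : forall φ χ,
  (forall θ w, U θ -> φ θ w = χ θ w) -> Cn_param n φ -> Cn_param n χ.
Proof.
  induction n as [|n IH]; intros φ χ E; simpl.
  - now apply jointly_continuous_on_ext.
  - intros [Hc [Hd Hn]]. split; [now apply (jointly_continuous_on_ext φ)|]. split.
    + intros θ w Hθ. apply ex_derive_ext_loc with (fun t => φ t w); [|now apply Hd].
      generalize (U_open θ Hθ); apply filter_imp. intros t Ht. now apply E.
    + apply IH with (partial_param φ); [|exact Hn].
      intros θ w Hθ. now apply partial_param_ext.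
Qed.

Lemma Cn_param_S n φ : Cn_param (S n) φ -> Cn_param n φ.
Proof.
  revert φ; induction n as [|n IH]; intros φ [Hc [Hd Hn]]; [exact Hc|].
  split; [exact Hc|]. split; [exact Hd|]. now apply IH.
Qed.

Lemma Cn_param_plus n : forall φ ψ,
  Cn_param n φ -> Cn_param n ψ -> Cn_param n (fun u v => φ u v + ψ u v).
Proof.
  induction n as [|n IH]; intros φ ψ Hφ Hψ.
  - intros θ w Hθ. now apply continuity_2d_pt_plus; [apply Hφ|apply Hψ].
  - destruct Hφ as [Cφ [Dφ Nφ]], Hψ as [Cψ [Dψ Nψ]].
    split; [intros θ w Hθ; now apply continuity_2d_pt_plus; [apply Cφ|apply Cψ]|]. split.
    + intros θ w Hθ. apply (ex_derive_plus (fun t => φ t w) (fun t => ψ t w)); auto.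
    + apply Cn_param_ext with (fun u v => partial_param φ u v + partial_param ψ u v).
      * intros θ w Hθ. unfold partial_param. now rewrite Derive_plus; auto.
      * now apply IH.
Qed.

Lemma Cn_param_mult n : forall φ ψ,
  Cn_param n φ -> Cn_param n ψ -> Cn_param n (fun u v => φ u v * ψ u v).
Proof.
  induction n as [|n IH]; intros φ ψ Hφ Hψ.
  - intros θ w Hθ. now apply continuity_2d_pt_mult; [apply Hφ|apply Hψ].
  - pose proof (Cn_param_S _ _ Hφ) as Mφ. pose proof (Cn_param_S _ _ Hψ) as Mψ.
    destruct Hφ as [Cφ [Dφ Nφ]], Hψ as [Cψ [Dψ Nψ]].
    split; [intros θ w Hθ; now apply continuity_2d_pt_mult; [apply Cφ|apply Cψ]|]. split.
    + intros θ w Hθ. now apply ex_derive_mult; auto.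
    + apply Cn_param_ext with
        (fun u v => partial_param φ u v * ψ u v + φ u v * partial_param ψ u v).
      * intros θ w Hθ. unfold partial_param. now rewrite Derive_mult; auto.
      * apply Cn_param_plus; now apply IH.
Qed.

Lemma Cn_param_const n c : Cn_param n (fun _ _ => c).
Proof.
  revert c; induction n as [|n IH]; intros c.
  - intros θ w _. apply continuity_2d_pt_const.
  - split; [intros θ w _; apply continuity_2d_pt_const|]. split.
    + intros; apply ex_derive_const.
    + apply Cn_param_ext with (fun _ _ => 0); [|apply IH].
      intros θ w _. unfold partial_param. now rewrite Derive_const.
Qed.

Lemma Cn_param_param n : Cn_param n (fun u _ => u).
Proof.
  destruct n as [|n].
  - intros θ w _. apply continuity_2d_pt_id1.
  - split; [intros θ w _; apply continuity_2d_pt_id1|]. split.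
    + intros; apply ex_derive_id.
    + apply Cn_param_ext with (fun _ _ => 1); [|apply Cn_param_const].
      intros θ w _. unfold partial_param. now rewrite Derive_id.
Qed.

Lemma Cn_param_var n h : (forall v, continuity_pt h v) -> Cn_param n (fun _ v => h v).
Proof.
  intros Hh.
  assert (C : jointly_continuous_on (fun _ v => h v)).
  { intros θ w _. apply continuity_1d_2d_pt_comp with (g := fun _ v => v);
      [apply Hh|apply continuity_2d_pt_id2]. }
  destruct n as [|n]; [exact C|]. split; [exact C|]. split.
  - intros; apply ex_derive_const.
  - apply Cn_param_ext with (fun _ _ => 0); [|apply Cn_param_const].
    intros θ w _. unfold partial_param. now rewrite Derive_const.
Qed.

Lemma Cn_param_inv n : forall φ, (forall θ w, U θ -> φ θ w <> 0) ->
  Cn_param n φ -> Cn_param n (fun u v => / φ u v).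
Proof.
  induction n as [|n IH]; intros φ Hnz Hφ.
  - intros θ w Hθ. now apply continuity_2d_pt_inv; [apply Hφ|apply Hnz].
  - pose proof (Cn_param_S _ _ Hφ) as Mφ. destruct Hφ as [Cφ [Dφ Nφ]].
    split; [intros θ w Hθ; now apply continuity_2d_pt_inv; [apply Cφ|apply Hnz]|]. split.
    + intros θ w Hθ. now apply (ex_derive_inv (fun t => φ t w)); auto.
    + apply Cn_param_ext with
        (fun u v => (-1 * partial_param φ u v) * / φ u v * / φ u v).
      * intros θ w Hθ. unfold partial_param.
        rewrite (Derive_inv (fun t => φ t w)); auto. field. auto.
      * apply Cn_param_mult; [apply Cn_param_mult|]; [apply Cn_param_mult| |];
          auto using Cn_param_const.
Qed.

Lemma Cinf_param_plus φ ψ :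
  Cinf_param φ -> Cinf_param ψ -> Cinf_param (fun u v => φ u v + ψ u v).
Proof. intros A B n. now apply Cn_param_plus. Qed.

Lemma Cinf_param_mult φ ψ :
  Cinf_param φ -> Cinf_param ψ -> Cinf_param (fun u v => φ u v * ψ u v).
Proof. intros A B n. now apply Cn_param_mult. Qed.

Lemma Cinf_param_const c : Cinf_param (fun _ _ => c).
Proof. intros n. apply Cn_param_const. Qed.

Lemma Cinf_param_param : Cinf_param (fun u _ => u).
Proof. intros n. apply Cn_param_param. Qed.

Lemma Cinf_param_var h : (forall v, continuity_pt h v) -> Cinf_param (fun _ v => h v).
Proof. intros H n. now apply Cn_param_var. Qed.

Lemma Cinf_param_inv φ : (forall θ w, U θ -> φ θ w <> 0) ->
  Cinf_param φ -> Cinf_param (fun u v => / φ u v).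
Proof. intros H A n. now apply Cn_param_inv. Qed.

Lemma Cinf_param_ext φ χ :
  (forall θ w, U θ -> φ θ w = χ θ w) -> Cinf_param φ -> Cinf_param χ.
Proof. intros H A n. now apply Cn_param_ext with φ. Qed.

Lemma Cinf_param_partial φ : Cinf_param φ -> Cinf_param (partial_param φ).
Proof. intros A n. exact (proj2 (proj2 (A (S n)))). Qed.

Lemma Cinf_param_iter n φ : Cinf_param φ -> Cinf_param (Nat.iter n partial_param φ).
Proof. intros A. induction n as [|n IH]; [exact A|]. now apply Cinf_param_partial. Qed.

Lemma Cinf_param_ex_derive φ θ w : Cinf_param φ -> U θ -> ex_derive (fun t => φ t w) θ.
Proof. intros A. exact (proj1 (proj2 (A 1%nat)) θ w). Qed.

Lemma Cinf_param_continuous φ θ w : Cinf_param φ -> U θ -> continuous (φ θ) w.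
Proof. intros A Hθ. now apply continuous_of_continuity_2d_pt, (A 0%nat). Qed.

Variables a b : R.

Definition param_integral (φ : R -> R -> R) (θ : R) : R := RInt (φ θ) a b.

Lemma ex_RInt_param φ θ : Cinf_param φ -> U θ -> ex_RInt (φ θ) a b.
Proof.
  intros A Hθ. apply (ex_RInt_continuous (V := R_CompleteNormedModule)).
  intros w _. now apply Cinf_param_continuous.
Qed.

Lemma is_derive_param_integral φ θ : Cinf_param φ -> U θ ->
  is_derive (param_integral φ) θ (param_integral (partial_param φ) θ).
Proof.
  intros A Hθ. apply (is_derive_RInt_param φ a b θ).
  - generalize (U_open θ Hθ); apply filter_imp. intros t Ht w _.
    now apply Cinf_param_ex_derive.
  - intros w _. now apply (Cinf_param_partial φ A 0%nat).
  - generalize (U_open θ Hθ); apply filter_imp. intros t Ht. now apply ex_RInt_param.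
Qed.

Lemma continuity_pt_param_integral φ θ : Cinf_param φ -> U θ ->
  continuity_pt (param_integral φ) θ.
Proof.
  intros A Hθ. apply continuity_pt_filterlim. apply (ex_derive_continuous (param_integral φ)).
  eexists. now apply is_derive_param_integral.
Qed.

Lemma Derive_n_param_integral n φ θ : Cinf_param φ -> U θ ->
  Derive_n (param_integral φ) n θ = param_integral (Nat.iter n partial_param φ) θ.
Proof.
  intros A. revert θ. induction n as [|n IH]; intros θ Hθ; [reflexivity|].
  simpl. rewrite (Derive_ext_loc _ (param_integral (Nat.iter n partial_param φ))).
  - apply is_derive_unique, is_derive_param_integral; [now apply Cinf_param_iter|exact Hθ].
  - generalize (U_open θ Hθ); apply filter_imp. intros t Ht. now apply IH.
Qed.

Lemma ex_derive_n_param_integral n φ θ : Cinf_param φ -> U θ ->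
  ex_derive_n (param_integral φ) n θ.
Proof.
  intros A Hθ. destruct n as [|n]; [exact I|]. simpl.
  apply ex_derive_ext_loc with (param_integral (Nat.iter n partial_param φ)).
  - generalize (U_open θ Hθ); apply filter_imp. intros t Ht.
    symmetry. now apply Derive_n_param_integral.
  - eexists. apply is_derive_param_integral; [now apply Cinf_param_iter|exact Hθ].
Qed.

End ParametricSmoothness.

Lemma continuity_pt_Series_normal (fn : nat -> R -> R) (b : nat -> R) :
  (forall s w, Rabs (fn s w) <= b s) -> ex_series b -> (forall s w, continuity_pt (fn s) w) ->
  forall w, continuity_pt (fun w => Series (fun s => fn s w)) w.
Proof.
  intros Hb [l Hl] Hc w.
  assert (Hr : 0 < Rabs w + 1) by (pose proof (Rabs_pos w); lra).
  assert (N : CVN_r fn (mkposreal _ Hr)).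
  { exists b, l. split; [|intros; apply Hb].
    apply is_series_Reals. eapply is_series_ext; [|exact Hl]. intros k.
    symmetry. apply Rabs_pos_eq. eapply Rle_trans; [apply Rabs_pos|apply (Hb k 0)]. }
  destruct (CVN_CVU_r fn _ N w ltac:(simpl; lra)) as [e He].
  apply (CVU_continuity _ _ w e He); [|apply Boule_center].
  intros n y _. apply continuity_pt_finite_SF. intros; apply Hc.
Qed.

Lemma cos_ge_1_sub_sqr_half u : 0 <= u <= 1 -> 1 - u ^ 2 / 2 <= cos u.
Proof.
  intros Hu. destruct (Req_dec u 0) as [->|Hu0]; [rewrite cos_0; lra|].
  replace u with (2 * (u / 2)) at 2 by field. rewrite cos_2a_sin.
  pose proof (sin_lt_x (u / 2) ltac:(lra)).
  assert (0 <= sin (u / 2)) by (apply sin_ge_0; pose proof PI2_1; lra).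
  nra.
Qed.

Lemma ex_RInt_continuous_sub (h : R -> R) a b x y :
  (forall z, a <= z <= b -> continuous h z) -> a <= x <= b -> a <= y <= b -> ex_RInt h x y.
Proof.
  intros H Hx Hy. apply (ex_RInt_continuous (V := R_CompleteNormedModule)).
  intros z [Hz1 Hz2]. apply H. split.
  - eapply Rle_trans; [|apply Hz1]. apply Rmin_glb; lra.
  - eapply Rle_trans; [apply Hz2|]. apply Rmax_lub; lra.
Qed.

Lemma RInt_le_const (h : R -> R) a b B : a <= b -> ex_RInt h a b ->
  (forall x, a <= x <= b -> h x <= B) -> RInt h a b <= B * (b - a).
Proof.
  intros Hab Hex H.
  replace (B * (b - a)) with (RInt (fun _ => B) a b)
    by (rewrite (RInt_const (V := R_CompleteNormedModule)); apply Rmult_comm).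
  apply RInt_le; [exact Hab|exact Hex|apply (ex_RInt_const (V := R_CompleteNormedModule))|].
  intros x Hx; apply H; lra.
Qed.

Lemma RInt_le_window (h : R -> R) a b c d B W : a <= b -> b <= c -> c <= d ->
  (forall x, a <= x <= d -> continuous h x) ->
  (forall x, a <= x <= d -> h x <= B) -> (forall x, b <= x <= c -> h x <= - W) ->
  RInt h a d <= B * (d - a - (c - b)) - W * (c - b).
Proof.
  intros Hab Hbc Hcd Hc Hup Hw.
  assert (E : forall x y, a <= x <= d -> a <= y <= d -> ex_RInt h x y)
    by (intros; now apply (ex_RInt_continuous_sub h a d)).
  rewrite <- (RInt_Chasles (V := R_CompleteNormedModule) h a c d), <- (RInt_Chasles h a b c);
    try (apply E; lra).
  pose proof (RInt_le_const h a b B Hab (E a b ltac:(lra) ltac:(lra)) ltac:(intros; apply Hup; lra)).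
  pose proof (RInt_le_const h b c (- W) Hbc (E b c ltac:(lra) ltac:(lra)) ltac:(intros; apply Hw; lra)).
  pose proof (RInt_le_const h c d B Hcd (E c d ltac:(lra) ltac:(lra)) ltac:(intros; apply Hup; lra)).
  unfold plus; simpl. lra.
Qed.

Lemma RInt_odd (h : R -> R) a : (forall x, h (- x) = - h x) -> ex_RInt h a (- a) ->
  RInt h (- a) a = 0.
Proof.
  intros Ho Hex.
  assert (H1 : is_RInt h (- - a) (- a) (RInt h a (- a))).
  { rewrite Ropp_involutive. now apply (RInt_correct (V := R_CompleteNormedModule)). }
  pose proof (is_RInt_comp_opp (V := R_NormedModule) h (- a) a _ H1) as H2.
  assert (H3 : is_RInt h (- a) a (RInt h a (- a))).
  { eapply is_RInt_ext; [|exact H2]. intros x _. unfold opp; simpl. rewrite Ho. ring. }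
  apply (is_RInt_unique (V := R_CompleteNormedModule)) in H3.
  pose proof (opp_RInt_swap (V := R_CompleteNormedModule) h a (- a) Hex) as H4.
  unfold opp in H4; simpl in H4. lra.
Qed.

Lemma compact_zeros_in_interval (f : R -> R) (Z : R -> Prop) a b :
  (forall x, a <= x <= b -> continuity_pt f x) ->
  (forall x, Z x <-> a <= x <= b /\ f x = 0) -> compact Z.
Proof.
  intros Hc HZ. apply compact_P4 with (fun x => a <= x <= b); [apply compact_P3| |].
  2: { intros x Hx. now apply HZ. }
  intros x Hx.
  assert (Hout : forall d : R, 0 < d -> (forall y, Rabs (y - x) < d -> ~ (a <= y <= b)) ->
                 neighbourhood (complementary Z) x).
  { intros d Hd H. exists (mkposreal d Hd). intros y Hy HZy. apply HZ in HZy. now apply (H y Hy). }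
  destruct (Rlt_le_dec x a) as [Ha|Ha]; [|destruct (Rlt_le_dec b x) as [Hb|Hb]].
  - apply (Hout (a - x)); [lra|]. intros y Hy. apply Rabs_def2 in Hy. lra.
  - apply (Hout (x - b)); [lra|]. intros y Hy. apply Rabs_def2 in Hy. lra.
  - assert (Hfx : f x <> 0) by (intros E; apply Hx, HZ; auto).
    destruct (proj1 (continuity_pt_locally f x) (Hc x (conj Ha Hb))
                (mkposreal _ (Rabs_pos_lt _ Hfx))) as [d Hd].
    exists d. intros y Hy HZy. apply HZ in HZy. specialize (Hd y Hy). simpl in Hd.
    rewrite (proj2 HZy), Rminus_0_l, Rabs_Ropp in Hd. lra.
Qed.

Lemma ex_min_of_interval (F : R -> R) (U : R -> Prop) a b x0 : a <= x0 <= b ->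
  (forall x, a <= x <= b -> U x /\ continuity_pt F x) ->
  (forall t, U t -> t < a \/ b < t -> F x0 <= F t) ->
  exists θ, U θ /\ forall t, U t -> F θ <= F t.
Proof.
  intros Hx0 Hab Hout.
  destruct (continuity_ab_min F a b ltac:(lra) (fun x Hx => proj2 (Hab x Hx))) as [θ [Hmin Hθ]].
  exists θ. split; [now apply Hab|]. intros t Ht.
  destruct (Rlt_le_dec t a); [|destruct (Rlt_le_dec b t)]; auto.
  - specialize (Hmin x0 Hx0). specialize (Hout t Ht (or_introl r)). lra.
  - specialize (Hmin x0 Hx0). specialize (Hout t Ht (or_intror r0)). lra.
Qed.

Lemma is_derive_local_min (F : R -> R) a b θ l : a < θ < b ->
  (forall x, a < x < b -> F θ <= F x) -> is_derive F θ l -> l = 0.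
Proof.
  intros Hθ Hmin D. apply is_derive_Reals in D.
  exact (deriv_minimum F a b θ (exist _ l D) (proj1 Hθ) (proj2 Hθ)
           (fun x Hax Hxb => Hmin x (conj Hax Hxb))).
Qed.

(** * The spectral density and the integrands *)

Definition kappa_re (κ : nat -> R) (w : R) : R := Series (fun s => κ s * cos (INR s * w)).
Definition kappa_im (κ : nat -> R) (w : R) : R := Series (fun s => κ s * sin (INR s * w)).

Lemma Cpow_cis w n : Cpow (cis w) n = cis (INR n * w).
Proof.
  induction n as [|n IH].
  - unfold cis. simpl. now rewrite Rmult_0_l, cos_0, sin_0.
  - simpl Cpow. rewrite IH, S_INR. unfold cis, Cmult; simpl.
    replace ((INR n + 1) * w) with (w + INR n * w) by ring.
    rewrite cos_plus, sin_plus. f_equal; ring.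
Qed.

Lemma kappa_fun_cis κ w : kappa_fun κ (cis w) = (kappa_re κ w, kappa_im κ w).
Proof.
  unfold kappa_fun, kappa_re, kappa_im.
  f_equal; apply Series_ext; intros s; rewrite Cpow_cis; unfold cis, RtoC, Cmult; simpl; ring.
Qed.

Lemma g_y_eq σ κ w : g_y σ κ w = σ / (2 * PI) * (kappa_re κ w ^ 2 + kappa_im κ w ^ 2).
Proof. unfold g_y. now rewrite kappa_fun_cis, Cmod2_alt. Qed.

Lemma g_y_opp σ κ w : g_y σ κ (- w) = g_y σ κ w.
Proof.
  rewrite !g_y_eq. unfold kappa_re, kappa_im.
  rewrite (Series_ext (fun s => κ s * sin (INR s * - w)) (fun s => - (κ s * sin (INR s * w)))),
          Series_opp.
  - rewrite (Series_ext (fun s => κ s * cos (INR s * - w)) (fun s => κ s * cos (INR s * w))); [ring|].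
    intros s. now rewrite <- Ropp_mult_distr_r, cos_neg.
  - intros s. rewrite <- Ropp_mult_distr_r, sin_neg. ring.
Qed.

Lemma continuity_Series_trig (κ : nat -> R) (φ : R -> R) :
  ex_series (fun s => Rabs (κ s)) -> (forall x, Rabs (φ x) <= 1) -> continuity φ ->
  continuity (fun w => Series (fun s => κ s * φ (INR s * w))).
Proof.
  intros Hκ Hb Hc x. apply (continuity_pt_Series_normal _ (fun s => Rabs (κ s))); auto.
  - intros s w. rewrite Rabs_mult. pose proof (Hb (INR s * w)). pose proof (Rabs_pos (κ s)). nra.
  - intros s w. apply continuity_pt_mult; [apply continuity_pt_const; now intros ? ?|].
    apply (continuity_pt_comp (fun v => INR s * v)); [|apply Hc].
    apply continuity_pt_mult; [apply continuity_pt_const; now intros ? ?|apply continuity_pt_id].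
Qed.

Section SpectralDensity.

Variables (σ : R) (κ : nat -> R).
Hypothesis κ_summable : ex_series (fun s => Rabs (κ s)).

Lemma continuity_g_y : continuity (g_y σ κ).
Proof.
  intros w. apply continuity_pt_ext with
    (fun w => σ / (2 * PI) * (kappa_re κ w * kappa_re κ w + kappa_im κ w * kappa_im κ w)).
  { intros; rewrite g_y_eq; ring. }
  assert (HA : continuity (kappa_re κ)).
  { apply continuity_Series_trig; auto using continuity_cos.
    intros x; apply Rabs_le, COS_bound. }
  assert (HB : continuity (kappa_im κ)).
  { apply continuity_Series_trig; auto using continuity_sin.
    intros x; apply Rabs_le, SIN_bound. }
  apply continuity_pt_mult; [apply continuity_pt_const; now intros ? ?|].
  apply continuity_pt_plus; apply continuity_pt_mult; auto.
Qed.

Hypothesis σ_pos : 0 < σ.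
Hypothesis kappa_nonzero : forall z : C, Cmod z <= 1 -> kappa_fun κ z <> RtoC 0.

Lemma g_y_pos w : 0 < g_y σ κ w.
Proof.
  unfold g_y. apply Rmult_lt_0_compat.
  - apply Rdiv_lt_0_compat; [exact σ_pos|]. pose proof PI_RGT_0. lra.
  - apply pow_lt, Cmod_gt_0, kappa_nonzero.
    unfold Cmod, cis; simpl. rewrite Rmult_1_r, Rmult_1_r, <- sqrt_1.
    apply Req_le. f_equal. rewrite <- (sin2_cos2 w). unfold Rsqr. ring.
Qed.

Lemma g_y_bounds : exists m M, 0 < m <= M /\
  forall w, - PI <= w <= PI -> m <= g_y σ κ w <= M.
Proof.
  pose proof PI_RGT_0.
  destruct (continuity_ab_min (g_y σ κ) (- PI) PI ltac:(lra) (fun c _ => continuity_g_y c))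
    as [a [Ha _]].
  destruct (continuity_ab_maj (g_y σ κ) (- PI) PI ltac:(lra) (fun c _ => continuity_g_y c))
    as [b [Hb _]].
  exists (g_y σ κ a), (g_y σ κ b). split; [split; [apply g_y_pos|]|].
  - apply Rle_trans with (g_y σ κ 0); [apply Ha|apply Hb]; lra.
  - intros w Hw; split; auto.
Qed.

End SpectralDensity.

(* [den t (cos w) = |1 + t e^{iw}|^2], and [kernel β θ (cos w) * g_y w] is the real part
   of the integrand of [f_est] inside its leading minus sign. *)
Definition den (t c : R) : R := 1 + 2 * t * c + t ^ 2.

Definition kernel (β θ c : R) : R := (c + β * θ) / (den θ c * den (β * θ) c).

Lemma Theta_open : open in_Theta.
Proof. apply open_and; [apply open_gt|apply open_lt]. Qed.

Lemma in_Theta_scale β θ : 0 <= β <= 1 -> in_Theta θ -> in_Theta (β * θ).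
Proof. unfold in_Theta; intros; destruct (Rle_dec 0 θ); split; nra. Qed.

Lemma den_pos t c : in_Theta t -> -1 <= c <= 1 -> 0 < den t c.
Proof. unfold in_Theta, den; intros. destruct (Rle_dec 0 t); nra. Qed.

Lemma den_cos_pos t w : in_Theta t -> 0 < den t (cos w).
Proof. intros Ht. apply den_pos; [exact Ht|apply COS_bound]. Qed.

Lemma Cmod_1_plus_cis_sqr θ w : Cmod (Cplus (RtoC 1) (Cmult (RtoC θ) (cis w))) ^ 2 = den θ (cos w).
Proof.
  rewrite Cmod2_alt. unfold den, cis, RtoC, Cplus, Cmult; simpl.
  pose proof (sin2_cos2 w) as H. unfold Rsqr in H. nra.
Qed.

Section Integrands.

Variables (σ : R) (κ : nat -> R).

Definition f_re (β θ w : R) : R := kernel β θ (cos w) * g_y σ κ w.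
Definition f_im (β θ w : R) : R :=
  sin w / (den θ (cos w) * den (β * θ) (cos w)) * g_y σ κ w.
Definition Lbar_integrand (θ w : R) : R := g_y σ κ w / den θ (cos w).

Definition f_re_integral (β θ : R) : R := param_integral (- PI) PI (f_re β) θ.

Lemma f_est_eq β θ : 0 <= β <= 1 -> in_Theta θ ->
  f_est σ κ θ β = (- param_integral (- PI) PI (f_re β) θ, - param_integral (- PI) PI (f_im β) θ).
Proof.
  intros Hβ Hθ. unfold f_est, RIntC, Copp, param_integral; cbn [fst snd].
  f_equal; f_equal; apply RInt_ext; intros w _;
    rewrite Cmod_mult, Rpow_mult_distr, !Cmod_1_plus_cis_sqr;
    pose proof (den_cos_pos θ w Hθ);
    pose proof (den_cos_pos (β * θ) w (in_Theta_scale β θ Hβ Hθ));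
    unfold f_re, f_im, kernel, cis, Cdiv, Cmult, Cplus, Cinv, RtoC; simpl; field; lra.
Qed.

Lemma Lbar_eq θ : Lbar σ κ θ = param_integral (- PI) PI Lbar_integrand θ.
Proof. apply RInt_ext. intros w _. now rewrite Cmod_1_plus_cis_sqr. Qed.

Hypothesis κ_summable : ex_series (fun s => Rabs (κ s)).

Ltac solve_Cinf_param :=
  repeat first [ exact Theta_open | exact continuity_cos | exact continuity_sin
               | apply Cinf_param_const | apply Cinf_param_param | apply Cinf_param_var
               | apply Cinf_param_plus | apply Cinf_param_mult ].

Lemma Cinf_param_den β : Cinf_param in_Theta (fun u v => den (β * u) (cos v)).
Proof. unfold den. solve_Cinf_param. Qed.

Lemma Cinf_param_inv_den2 β : 0 <= β <= 1 ->
  Cinf_param in_Theta (fun u v => / (den u (cos v) * den (β * u) (cos v))).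
Proof.
  intros Hβ. apply Cinf_param_inv; [exact Theta_open| |].
  - intros θ w Hθ. apply Rgt_not_eq, Rmult_lt_0_compat; apply den_cos_pos;
      auto using in_Theta_scale.
  - apply Cinf_param_mult; [exact Theta_open| |apply Cinf_param_den].
    apply Cinf_param_ext with (fun u v => den (1 * u) (cos v));
      [exact Theta_open| |apply Cinf_param_den].
    intros; now rewrite Rmult_1_l.
Qed.

Lemma Cinf_param_g_y : Cinf_param in_Theta (fun _ w => g_y σ κ w).
Proof. apply Cinf_param_var; [exact Theta_open|now apply continuity_g_y]. Qed.

Lemma Cinf_param_f_re β : 0 <= β <= 1 -> Cinf_param in_Theta (f_re β).
Proof.
  intros Hβ. apply Cinf_param_ext with
    (fun u v => (cos v + β * u) * / (den u (cos v) * den (β * u) (cos v)) * g_y σ κ v);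
    [exact Theta_open|reflexivity|].
  apply Cinf_param_mult; [exact Theta_open| |apply Cinf_param_g_y].
  apply Cinf_param_mult; [exact Theta_open| |now apply Cinf_param_inv_den2].
  solve_Cinf_param.
Qed.

Lemma Cinf_param_f_im β : 0 <= β <= 1 -> Cinf_param in_Theta (f_im β).
Proof.
  intros Hβ. apply Cinf_param_ext with
    (fun u v => sin v * / (den u (cos v) * den (β * u) (cos v)) * g_y σ κ v);
    [exact Theta_open|reflexivity|].
  apply Cinf_param_mult; [exact Theta_open| |apply Cinf_param_g_y].
  apply Cinf_param_mult; [exact Theta_open| |now apply Cinf_param_inv_den2].
  solve_Cinf_param.
Qed.

Lemma Cinf_param_Lbar_integrand : Cinf_param in_Theta Lbar_integrand.
Proof.
  apply Cinf_param_ext with (fun u v => g_y σ κ v * / den (1 * u) (cos v));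
    [exact Theta_open|intros; unfold Lbar_integrand; now rewrite Rmult_1_l|].
  apply Cinf_param_mult; [exact Theta_open|apply Cinf_param_g_y|].
  apply Cinf_param_inv; [exact Theta_open| |apply Cinf_param_den].
  intros θ w Hθ. rewrite Rmult_1_l. now apply Rgt_not_eq, den_cos_pos.
Qed.

Lemma f_im_integral_eq_0 β θ : 0 <= β <= 1 -> in_Theta θ ->
  param_integral (- PI) PI (f_im β) θ = 0.
Proof.
  intros Hβ Hθ. apply RInt_odd.
  - intros w. unfold f_im. rewrite sin_neg, cos_neg, g_y_opp. unfold Rdiv. ring.
  - apply (ex_RInt_continuous (V := R_CompleteNormedModule)). intros w _.
    apply (Cinf_param_continuous in_Theta); auto using Cinf_param_f_im.
Qed.

Lemma f_est_eq_0_iff β θ : 0 <= β <= 1 -> in_Theta θ ->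
  f_est σ κ θ β = RtoC 0 <-> f_re_integral β θ = 0.
Proof.
  intros Hβ Hθ. unfold f_re_integral.
  rewrite f_est_eq, f_im_integral_eq_0; auto. unfold RtoC. split.
  - intros E. injection E. lra.
  - intros ->. f_equal; ring.
Qed.

Lemma smooth_f_est β : 0 <= β <= 1 -> smooth_on_Theta (fun θ => f_est σ κ θ β).
Proof.
  intros Hβ n θ Hθ.
  assert (E : forall φ, Cinf_param in_Theta φ ->
            ex_derive_n (fun t => - param_integral (- PI) PI φ t) n θ).
  { intros φ A. apply ex_derive_n_ext_loc with (param_integral (- PI) PI (fun u v => - φ u v)).
    - generalize (Theta_open θ Hθ); apply filter_imp. intros t Ht.
      apply (RInt_opp (V := R_CompleteNormedModule)). now apply (ex_RInt_param in_Theta).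
    - apply (ex_derive_n_param_integral in_Theta Theta_open); [|exact Hθ].
      apply Cinf_param_ext with (fun u v => -1 * φ u v); [exact Theta_open|intros; ring|].
      apply Cinf_param_mult; [exact Theta_open|apply Cinf_param_const; exact Theta_open|exact A]. }
  split.
  - apply ex_derive_n_ext_loc with (fun t => - param_integral (- PI) PI (f_re β) t).
    + generalize (Theta_open θ Hθ); apply filter_imp. intros t Ht. now rewrite f_est_eq.
    + apply E, Cinf_param_f_re, Hβ.
  - apply ex_derive_n_ext_loc with (fun t => - param_integral (- PI) PI (f_im β) t).
    + generalize (Theta_open θ Hθ); apply filter_imp. intros t Ht. now rewrite f_est_eq.
    + apply E, Cinf_param_f_im, Hβ.
Qed.

End Integrands.

(** * The kernel near theta = 1 *)

Lemma den_opp t c : den (- t) (- c) = den t c.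
Proof. unfold den; ring. Qed.

Lemma kernel_opp β θ c : kernel β (- θ) (- c) = - kernel β θ c.
Proof.
  unfold kernel. rewrite <- Ropp_mult_distr_r, !den_opp. unfold Rdiv. ring.
Qed.

Lemma den_eq_sqr_add t c : den t c = (t + c) ^ 2 + (1 - c ^ 2).
Proof. unfold den; ring. Qed.

Lemma kernel_le_near_one_lt1 β θ c : 0 <= β < 1 -> 1/2 <= θ < 1 -> -1 <= c <= 1 ->
  kernel β θ c <= 2 / (1 - β) ^ 3.
Proof.
  intros Hβ Hθ Hc. unfold kernel.
  assert (Hb3 : 0 < (1 - β) ^ 3) by (apply pow_lt; lra).
  assert (0 <= β * θ <= θ) by (split; nra).
  assert (H1 : 0 < den θ c) by (apply den_pos; unfold in_Theta; lra).
  assert (H2 : 0 < den (β * θ) c) by (apply den_pos; unfold in_Theta; lra).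
  apply Rle_div_l; [now apply Rmult_lt_0_compat|].
  destruct (Rle_dec (c + β * θ) 0) as [N|N].
  - enough (0 <= 2 / (1 - β) ^ 3 * (den θ c * den (β * θ) c)) by lra.
    apply Rmult_le_pos; [apply Rlt_le, Rdiv_lt_0_compat|apply Rlt_le, Rmult_lt_0_compat]; lra.
  - assert (E1 : 1 - β <= den θ c).
    { replace (den θ c) with ((1 - θ) ^ 2 + 2 * θ * (1 + c)) by (unfold den; ring).
      assert (1 - β <= 1 + c) by nra. nra. }
    assert (E2 : (1 - β) ^ 2 <= den (β * θ) c).
    { replace (den (β * θ) c) with ((1 - β * θ) ^ 2 + 2 * (β * θ) * (1 + c)) by (unfold den; ring).
      assert (1 - β <= 1 - β * θ) by nra. nra. }
    assert (E12 : (1 - β) ^ 3 <= den θ c * den (β * θ) c).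
    { replace ((1 - β) ^ 3) with ((1 - β) * (1 - β) ^ 2) by ring.
      apply Rmult_le_compat; nra. }
    replace (2 / (1 - β) ^ 3 * (den θ c * den (β * θ) c))
      with (2 * ((den θ c * den (β * θ) c) / (1 - β) ^ 3)) by (field; lra).
    assert (1 <= den θ c * den (β * θ) c / (1 - β) ^ 3) by (apply Rle_div_r; lra).
    lra.
Qed.

Lemma kernel_le_near_one β r c : 0 <= β <= 1 -> 0 < r -> r ^ 2 <= 1/2 -> -1 <= c <= 1 ->
  kernel β (1 - r ^ 2) c <= 1 / r ^ 3.
Proof.
  intros Hβ Hr Hr2 Hc. set (θ := 1 - r ^ 2). unfold kernel.
  assert (Hr3 : 0 < r ^ 3) by (apply pow_lt; lra).
  assert (Hr1 : r <= 1) by nra.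
  assert (Hθ : 1/2 <= θ < 1) by (unfold θ; split; nra).
  assert (0 <= β * θ <= θ) by (split; nra).
  assert (H1 : 0 < den θ c) by (apply den_pos; unfold in_Theta; lra).
  assert (H2 : 0 < den (β * θ) c) by (apply den_pos; unfold in_Theta; lra).
  apply Rle_div_l; [now apply Rmult_lt_0_compat|].
  replace (1 / r ^ 3 * (den θ c * den (β * θ) c)) with ((den θ c * den (β * θ) c) / r ^ 3)
    by (field; lra).
  apply Rle_div_r; [exact Hr3|].
  set (t := c + β * θ).
  destruct (Rle_dec t 0) as [Nt|Pt]; [|destruct (Rle_dec 0 c) as [Pc|Nc]].
  - assert (0 <= den θ c * den (β * θ) c) by (apply Rlt_le, Rmult_lt_0_compat; lra).
    assert (0 <= - t * r ^ 3) by (apply Rmult_le_pos; lra). lra.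
  - assert (1 <= den θ c) by (unfold den, θ in *; nra).
    assert (1 <= den (β * θ) c) by (unfold den; nra).
    assert (r ^ 3 <= 1 / 2) by (unfold θ in *; nra).
    assert (t <= 2) by (unfold t, θ in *; lra).
    assert (1 <= den θ c * den (β * θ) c) by nra. nra.
  - assert (Hs : r ^ 2 <= 1 - c ^ 2) by (unfold t, θ in *; nra).
    assert (D1 : t ^ 2 + r ^ 2 <= den θ c).
    { rewrite den_eq_sqr_add. assert (t <= θ + c) by (unfold t; nra). nra. }
    assert (D2 : t ^ 2 + r ^ 2 <= den (β * θ) c) by (rewrite den_eq_sqr_add; unfold t in *; nra).
    assert (AM : 2 * t * r <= t ^ 2 + r ^ 2) by (pose proof (pow2_ge_0 (t - r)); nra).
    assert (2 * t * r * r ^ 2 <= (t ^ 2 + r ^ 2) * (t ^ 2 + r ^ 2))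
      by (apply Rmult_le_compat; nra).
    assert (0 <= t * r ^ 3) by (apply Rmult_le_pos; lra).
    assert ((t ^ 2 + r ^ 2) * (t ^ 2 + r ^ 2) <= den θ c * den (β * θ) c)
      by (apply Rmult_le_compat; nra).
    lra.
Qed.

Lemma den_window_le ε c : 0 < ε <= 1/2 -> -1 <= c <= -1 + ε ^ 2 / 2 ->
  den (1 - ε) c <= 2 * ε ^ 2.
Proof.
  intros Hε Hc. rewrite den_eq_sqr_add.
  assert (1 - c ^ 2 <= ε ^ 2) by nra.
  assert (- ε <= 1 - ε + c <= 0) by nra.
  assert ((1 - ε + c) ^ 2 <= ε ^ 2) by nra.
  lra.
Qed.

Lemma kernel_window_le β ε c : 0 <= β <= 1 -> 0 < ε <= 1/2 -> -1 <= c <= -1 + ε ^ 2 / 2 ->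
  kernel β (1 - ε) c <= - (1 / (10 * ε ^ 2)).
Proof.
  intros Hβ Hε Hc. unfold kernel. set (θ := 1 - ε). set (t := c + β * θ).
  assert (Hε2 : 0 < ε ^ 2 <= 1/4) by (split; nra).
  assert (Hθ : 1/2 <= θ < 1) by (unfold θ; lra).
  assert (0 <= β * θ <= θ) by (split; nra).
  assert (Ht : -1 <= t <= - ε / 2) by (unfold t, θ in *; nra).
  assert (H1 : 0 < den θ c) by (apply den_pos; unfold in_Theta; lra).
  assert (H2 : 0 < den (β * θ) c) by (apply den_pos; unfold in_Theta; lra).
  assert (B1 : den θ c <= 2 * ε ^ 2) by now apply den_window_le.
  assert (B2 : den (β * θ) c <= 5 * t ^ 2).
  { rewrite den_eq_sqr_add. fold t. replace (β * θ + c) with t by (unfold t; ring). nra. }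
  assert (B12 : den θ c * den (β * θ) c <= 10 * ε ^ 2 * - t).
  { apply Rle_trans with ((2 * ε ^ 2) * (5 * t ^ 2)); [apply Rmult_le_compat; lra|nra]. }
  apply Rle_div_l; [now apply Rmult_lt_0_compat|].
  replace (- (1 / (10 * ε ^ 2)) * (den θ c * den (β * θ) c))
    with (- ((den θ c * den (β * θ) c) / (10 * ε ^ 2))) by (field; lra).
  enough (den θ c * den (β * θ) c / (10 * ε ^ 2) <= - t) by lra.
  apply Rle_div_l; lra.
Qed.

Lemma kernel1_window_le ε c : 0 < ε <= 1/2 -> -1 <= c <= -1 + ε ^ 2 / 2 ->
  kernel 1 (1 - ε) c <= - (1 / (8 * ε ^ 3)).
Proof.
  intros Hε Hc. unfold kernel. rewrite Rmult_1_l. set (θ := 1 - ε).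
  assert (Hε3 : 0 < ε ^ 3) by (apply pow_lt; lra).
  assert (Hε2 : 0 < ε ^ 2 <= 1/4) by (split; nra).
  assert (Ht : c + θ <= - ε / 2) by (unfold θ; nra).
  assert (H1 : 0 < den θ c) by (apply den_pos; unfold in_Theta, θ; lra).
  assert (B1 : den θ c <= 2 * ε ^ 2) by now apply den_window_le.
  assert (B11 : den θ c * den θ c <= 4 * ε ^ 4).
  { apply Rle_trans with ((2 * ε ^ 2) * (2 * ε ^ 2)); [apply Rmult_le_compat; lra|nra]. }
  apply Rle_div_l; [now apply Rmult_lt_0_compat|].
  replace (- (1 / (8 * ε ^ 3)) * (den θ c * den θ c))
    with (- ((den θ c * den θ c) / (8 * ε ^ 3))) by (field; lra).
  enough (den θ c * den θ c / (8 * ε ^ 3) <= - (c + θ)) by lra.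
  apply Rle_div_l; [lra|]. nra.
Qed.

(* Against a weight with values in [[m, M]], the negative contribution of the window of
   width [ε] outweighs the positive part of the kernel on the rest of [[-π, π]]. *)
Definition kernel_dominated (m M β ε : R) : Prop :=
  exists P N, 0 <= P /\ 0 <= N /\ 2 * PI * M * P < m * ε * N /\
    (forall c, -1 <= c <= 1 -> kernel β (1 - ε) c <= P) /\
    (forall c, -1 <= c <= -1 + ε ^ 2 / 2 -> kernel β (1 - ε) c <= - N).

Lemma kernel_dominated_lt1 m M β : 0 < m -> 0 < M -> 0 <= β < 1 ->
  exists δ, 0 < δ <= 1/2 /\ forall ε, 0 < ε <= δ -> kernel_dominated m M β ε.
Proof.
  intros Hm HM Hβ. pose proof PI_RGT_0.
  set (P := 2 / (1 - β) ^ 3).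
  assert (HP : 0 < P) by (apply Rdiv_lt_0_compat; [lra|apply pow_lt; lra]).
  assert (HPM : 0 < PI * M) by nra.
  assert (Hq : 0 < m / (40 * PI * M * P)) by (apply Rdiv_lt_0_compat; nra).
  exists (Rmin (1/2) (m / (40 * PI * M * P))).
  split; [split; [now apply Rmin_glb_lt; lra|apply Rmin_l]|].
  intros ε [Hε Hεδ]. pose proof (Rle_trans _ _ _ Hεδ (Rmin_l _ _)).
  pose proof (Rle_trans _ _ _ Hεδ (Rmin_r _ _)) as Hεq.
  exists P, (1 / (10 * ε ^ 2)).
  assert (Hε2 : 0 < ε ^ 2) by nra.
  split; [lra|]. split; [apply Rlt_le, Rdiv_lt_0_compat; lra|]. split; [|split].
  - replace (m * ε * (1 / (10 * ε ^ 2))) with (m / (10 * ε)) by (field; lra).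
    apply (Rmult_lt_reg_r (10 * ε)); [lra|].
    replace (m / (10 * ε) * (10 * ε)) with m by (field; lra).
    assert (20 * PI * M * P * ε <= m / 2).
    { replace (m / 2) with (20 * PI * M * P * (m / (40 * PI * M * P))) by (field; lra).
      apply Rmult_le_compat_l; [nra|exact Hεq]. }
    nra.
  - intros c Hc. apply kernel_le_near_one_lt1; lra.
  - intros c Hc. apply kernel_window_le; lra.
Qed.

Lemma kernel_dominated_1 m M : 0 < m -> 0 < M ->
  exists δ, 0 < δ <= 1/2 /\ forall ε, 0 < ε <= δ -> kernel_dominated m M 1 ε.
Proof.
  intros Hm HM. pose proof PI_RGT_0.
  set (q := m / (32 * PI * M)).
  assert (HPM : 0 < PI * M) by nra.
  assert (Hq : 0 < q) by (apply Rdiv_lt_0_compat; nra).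
  exists (Rmin (1/2) (q ^ 2)).
  split; [split; [apply Rmin_glb_lt; nra|apply Rmin_l]|].
  intros ε [Hε Hεδ]. pose proof (Rle_trans _ _ _ Hεδ (Rmin_l _ _)).
  pose proof (Rle_trans _ _ _ Hεδ (Rmin_r _ _)).
  set (r := sqrt ε).
  assert (Hr : 0 < r) by (apply sqrt_lt_R0; lra).
  assert (Hr2 : r ^ 2 = ε) by (apply pow2_sqrt; lra).
  assert (Hrq : r <= q) by nra.
  exists (1 / r ^ 3), (1 / (8 * ε ^ 3)).
  assert (Hr3 : 0 < r ^ 3) by (apply pow_lt; lra).
  assert (Hε3 : 0 < ε ^ 3) by (apply pow_lt; lra).
  split; [apply Rlt_le, Rdiv_lt_0_compat; lra|].
  split; [apply Rlt_le, Rdiv_lt_0_compat; lra|]. split; [|split].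
  - rewrite <- Hr2. apply (Rmult_lt_reg_r (8 * r ^ 4)); [nra|].
    replace (2 * PI * M * (1 / r ^ 3) * (8 * r ^ 4)) with (16 * PI * M * r) by (field; lra).
    replace (m * r ^ 2 * (1 / (8 * (r ^ 2) ^ 3)) * (8 * r ^ 4)) with m by (field; lra).
    assert (16 * PI * M * r <= m / 2).
    { replace (m / 2) with (16 * PI * M * q) by (unfold q; field; lra).
      apply Rmult_le_compat_l; nra. }
    lra.
  - intros c Hc. rewrite <- Hr2. apply kernel_le_near_one; lra.
  - intros c Hc. now apply kernel1_window_le.
Qed.

Lemma kernel_dominated_eventually m M β : 0 < m -> 0 < M -> 0 <= β <= 1 ->
  exists δ, 0 < δ <= 1/2 /\ forall ε, 0 < ε <= δ -> kernel_dominated m M β ε.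
Proof.
  intros Hm HM Hβ. destruct (Rlt_le_dec β 1).
  - apply kernel_dominated_lt1; lra.
  - replace β with 1 by lra. now apply kernel_dominated_1.
Qed.

Lemma cos_window_pi ε w : 0 < ε <= 1/2 -> PI - ε <= w <= PI -> cos w <= -1 + ε ^ 2 / 2.
Proof.
  intros Hε Hw. replace w with (- (PI - w) + PI) by ring. rewrite neg_cos, cos_neg.
  pose proof (cos_ge_1_sub_sqr_half (PI - w) ltac:(lra)).
  assert ((PI - w) ^ 2 <= ε ^ 2) by (apply pow_incr; lra). lra.
Qed.

Lemma cos_window_0 ε w : 0 < ε <= 1/2 -> 0 <= w <= ε -> - cos w <= -1 + ε ^ 2 / 2.
Proof.
  intros Hε Hw. pose proof (cos_ge_1_sub_sqr_half w ltac:(lra)).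
  assert (w ^ 2 <= ε ^ 2) by (apply pow_incr; lra). lra.
Qed.

Section WindowIntegrals.

Variables (m M : R) (h c : R -> R) (b ε : R).
Hypothesis m_pos : 0 < m.
Hypothesis h_bounds : forall w, - PI <= w <= PI -> m <= h w <= M.
Hypothesis c_range : forall w, - PI <= w <= PI -> -1 <= c w <= 1.
Hypothesis ε_range : 0 < ε <= 1/2.
Hypothesis window_range : - PI <= b /\ b + ε <= PI.
Hypothesis c_window : forall w, b <= w <= b + ε -> c w <= -1 + ε ^ 2 / 2.

Lemma RInt_kernel_lt_0 β : kernel_dominated m M β ε ->
  (forall w, - PI <= w <= PI -> continuous (fun w => kernel β (1 - ε) (c w) * h w) w) ->
  RInt (fun w => kernel β (1 - ε) (c w) * h w) (- PI) PI < 0.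
Proof.
  intros [P [N [HP [HN [Hdom [Hup Hwin]]]]]] Hcont.
  pose proof PI_RGT_0. pose proof (h_bounds 0 ltac:(lra)).
  eapply Rle_lt_trans.
  - apply (RInt_le_window _ (- PI) b (b + ε) PI (P * M) (N * m)); try lra; [exact Hcont| |].
    + intros w Hw. specialize (h_bounds w Hw). specialize (Hup (c w) (c_range w Hw)).
      destruct (Rle_dec (kernel β (1 - ε) (c w)) 0).
      * assert (kernel β (1 - ε) (c w) * h w <= 0) by (apply Rmult_le_0_r; lra).
        assert (0 <= P * M) by (apply Rmult_le_pos; lra). lra.
      * apply Rmult_le_compat; lra.
    + intros w Hw. assert (Hw' : - PI <= w <= PI) by lra.
      specialize (h_bounds w Hw').
      specialize (Hwin (c w) (conj (proj1 (c_range w Hw')) (c_window w Hw))).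
      nra.
  - assert (0 <= P * M * ε) by (repeat apply Rmult_le_pos; lra). lra.
Qed.

Lemma RInt_inv_den_ge :
  (forall w, - PI <= w <= PI -> continuous (fun w => h w / den (1 - ε) (c w)) w) ->
  m / (2 * ε) <= RInt (fun w => h w / den (1 - ε) (c w)) (- PI) PI.
Proof.
  intros Hcont.
  assert (Hden : forall w, - PI <= w <= PI -> 0 < den (1 - ε) (c w))
    by (intros; apply den_pos; [unfold in_Theta; lra|auto]).
  assert (Hε2 : 0 < ε ^ 2) by nra.
  assert (H : RInt (fun w => - (h w / den (1 - ε) (c w))) (- PI) PI
              <= 0 * (PI - - PI - (b + ε - b)) - m / (2 * ε ^ 2) * (b + ε - b)).
  { apply RInt_le_window; try lra.
    - intros w Hw. apply (continuous_opp (fun w => h w / den (1 - ε) (c w))). now apply Hcont.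
    - intros w Hw. specialize (h_bounds w Hw).
      enough (0 <= h w / den (1 - ε) (c w)) by lra.
      apply Rdiv_le_0_compat; [lra|now apply Hden].
    - intros w Hw. assert (Hw' : - PI <= w <= PI) by lra.
      specialize (h_bounds w Hw').
      assert (D : den (1 - ε) (c w) <= 2 * ε ^ 2)
        by (apply den_window_le; [lra|split; [apply c_range|apply c_window]; lra]).
      enough (m / (2 * ε ^ 2) <= h w / den (1 - ε) (c w)) by lra.
      unfold Rdiv. apply Rmult_le_compat; try lra.
      + apply Rlt_le, Rinv_0_lt_compat; lra.
      + apply Rinv_le_contravar; [now apply Hden|exact D]. }
  rewrite (RInt_opp (V := R_CompleteNormedModule)) in H.
  - unfold opp in H; simpl in H. replace (ε * (ε * 1)) with (ε ^ 2) in H by ring.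
    replace (m / (2 * ε)) with (m / (2 * ε ^ 2) * (b + ε - b)) by (field; lra). lra.
  - apply (ex_RInt_continuous (V := R_CompleteNormedModule)). intros w Hw. apply Hcont.
    rewrite Rmin_left, Rmax_right in Hw; pose proof PI_RGT_0; lra.
Qed.

End WindowIntegrals.

(** * Zeros of f and minimizers of Lbar *)

Section Proposition.

Variables (σ : R) (κ : nat -> R).
Hypothesis σ_pos : 0 < σ.
Hypothesis κ_summable : ex_series (fun s => Rabs (κ s)).
Hypothesis kappa_nonzero : forall z : C, Cmod z <= 1 -> kappa_fun κ z <> RtoC 0.

Lemma continuous_f_re β θ w : 0 <= β <= 1 -> in_Theta θ -> continuous (f_re σ κ β θ) w.
Proof.
  intros Hβ Hθ. apply (Cinf_param_continuous in_Theta); [|exact Hθ].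
  now apply Cinf_param_f_re.
Qed.

Lemma f_re_opp β θ w : f_re σ κ β (- θ) w = - (kernel β θ (- cos w) * g_y σ κ w).
Proof. unfold f_re. rewrite <- (Ropp_involutive (cos w)) at 1. rewrite kernel_opp. ring. Qed.

Lemma continuous_kernel_opp_cos β ε w : 0 <= β <= 1 -> 0 < ε < 2 ->
  continuous (fun w => kernel β (1 - ε) (- cos w) * g_y σ κ w) w.
Proof.
  intros Hβ Hε. apply (continuous_ext (fun w => - f_re σ κ β (- (1 - ε)) w)).
  - intros x. rewrite f_re_opp. apply Ropp_involutive.
  - apply (continuous_opp (f_re σ κ β (- (1 - ε)))).
    apply continuous_f_re; [exact Hβ|unfold in_Theta; lra].
Qed.

Lemma f_re_integral_sign β : 0 <= β <= 1 ->
  exists δ, 0 < δ <= 1/2 /\ forall ε, 0 < ε <= δ ->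
    f_re_integral σ κ β (1 - ε) < 0 /\ 0 < f_re_integral σ κ β (- (1 - ε)).
Proof.
  intros Hβ. pose proof PI_RGT_0. pose proof PI2_1.
  destruct (g_y_bounds σ κ κ_summable σ_pos kappa_nonzero) as [m [M [[Hm HmM] Hg]]].
  destruct (kernel_dominated_eventually m M β Hm ltac:(lra) Hβ) as [δ [Hδ Hdom]].
  exists δ. split; [exact Hδ|]. intros ε Hε.
  assert (Hε' : 0 < ε <= 1/2) by lra.
  split.
  - apply (RInt_kernel_lt_0 m M (g_y σ κ) cos (PI - ε) ε); auto; try lra.
    + intros w _. apply COS_bound.
    + intros w Hw. apply cos_window_pi; lra.
    + intros w _. apply continuous_f_re; [exact Hβ|unfold in_Theta; lra].
  - unfold f_re_integral, param_integral.
    rewrite (RInt_ext _ (fun w => - (kernel β (1 - ε) (- cos w) * g_y σ κ w)))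
      by (intros w _; apply f_re_opp).
    rewrite (RInt_opp (V := R_CompleteNormedModule)).
    + enough (RInt (fun w => kernel β (1 - ε) (- cos w) * g_y σ κ w) (- PI) PI < 0)
        by (unfold opp; simpl; lra).
      apply (RInt_kernel_lt_0 m M (g_y σ κ) (fun w => - cos w) 0 ε); auto; try lra.
      * intros w _. pose proof (COS_bound w). lra.
      * intros w Hw. apply cos_window_0; lra.
      * intros w _. apply continuous_kernel_opp_cos; lra.
    + apply (ex_RInt_continuous (V := R_CompleteNormedModule)). intros w _.
      apply continuous_kernel_opp_cos; lra.
Qed.

Lemma Theta0_eq_zeros_in_interval β : 0 <= β <= 1 ->
  exists a, 0 < a < 1 /\ 0 < f_re_integral σ κ β (- a) /\ f_re_integral σ κ β a < 0 /\
    forall θ, Theta0 σ κ β θ <-> - a <= θ <= a /\ f_re_integral σ κ β θ = 0.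
Proof.
  intros Hβ. destruct (f_re_integral_sign β Hβ) as [δ [Hδ Hsign]].
  exists (1 - δ). split; [lra|]. split; [apply (Hsign δ); lra|]. split; [apply (Hsign δ); lra|].
  intros θ. unfold Theta0. split.
  - intros [Hθ Hf]. apply (f_est_eq_0_iff σ κ κ_summable β θ Hβ Hθ) in Hf.
    split; [|exact Hf]. unfold in_Theta in Hθ.
    destruct (Rle_dec (- (1 - δ)) θ), (Rle_dec θ (1 - δ)); [lra| | |lra]; exfalso.
    + destruct (Hsign (1 - θ) ltac:(lra)) as [Hneg _].
      replace (1 - (1 - θ)) with θ in Hneg by ring. lra.
    + destruct (Hsign (1 + θ) ltac:(lra)) as [_ Hpos].
      replace (- (1 - (1 + θ))) with θ in Hpos by ring. lra.
  - intros [Hθ Hf]. assert (Hθ' : in_Theta θ) by (unfold in_Theta; lra).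
    split; [exact Hθ'|]. now apply f_est_eq_0_iff.
Qed.

Lemma continuity_pt_f_re_integral β θ : 0 <= β <= 1 -> in_Theta θ ->
  continuity_pt (f_re_integral σ κ β) θ.
Proof.
  intros Hβ Hθ. apply (continuity_pt_param_integral in_Theta Theta_open); [|exact Hθ].
  now apply Cinf_param_f_re.
Qed.

Lemma Theta0_nonempty β : 0 <= β <= 1 -> exists θ, Theta0 σ κ β θ.
Proof.
  intros Hβ. destruct (Theta0_eq_zeros_in_interval β Hβ) as [a [Ha [Hpos [Hneg HZ]]]].
  destruct (IVT_interv (fun t => - f_re_integral σ κ β t) (- a) a) as [θ [Hθ Hz]]; try lra.
  - intros t Ht. apply continuity_pt_opp, continuity_pt_f_re_integral; [exact Hβ|].
    unfold in_Theta; lra.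
  - exists θ. apply HZ. split; [exact Hθ|lra].
Qed.

Lemma Theta0_compact β : 0 <= β <= 1 -> compact (Theta0 σ κ β).
Proof.
  intros Hβ. destruct (Theta0_eq_zeros_in_interval β Hβ) as [a [Ha [_ [_ HZ]]]].
  apply (compact_zeros_in_interval (f_re_integral σ κ β) _ (- a) a); [|exact HZ].
  intros t Ht. apply continuity_pt_f_re_integral; [exact Hβ|unfold in_Theta; lra].
Qed.

Lemma partial_param_Lbar_integrand θ w : in_Theta θ ->
  partial_param (Lbar_integrand σ κ) θ w = -2 * f_re σ κ 1 θ w.
Proof.
  intros Hθ. pose proof (den_cos_pos θ w Hθ) as Hd.
  unfold partial_param, Lbar_integrand, f_re, kernel. rewrite Rmult_1_l.
  apply is_derive_unique. unfold den in *. auto_derive; [lra|]. field. lra.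
Qed.

Lemma is_derive_Lbar θ : in_Theta θ -> is_derive (Lbar σ κ) θ (-2 * f_re_integral σ κ 1 θ).
Proof.
  intros Hθ. apply is_derive_ext with (param_integral (- PI) PI (Lbar_integrand σ κ)).
  { intros t. symmetry. apply Lbar_eq. }
  replace (-2 * f_re_integral σ κ 1 θ)
    with (param_integral (- PI) PI (partial_param (Lbar_integrand σ κ)) θ).
  - apply (is_derive_param_integral in_Theta Theta_open); [|exact Hθ].
    now apply Cinf_param_Lbar_integrand.
  - unfold f_re_integral, param_integral.
    rewrite (RInt_ext _ (fun w => scal (-2) (f_re σ κ 1 θ w)))
      by (intros w _; now apply partial_param_Lbar_integrand).
    apply (RInt_scal (V := R_CompleteNormedModule)).
    apply (ex_RInt_param in_Theta); [apply Cinf_param_f_re; auto; lra|exact Hθ].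
Qed.

Lemma Lbar_integrand_opp θ w : Lbar_integrand σ κ (- θ) w = g_y σ κ w / den θ (- cos w).
Proof. unfold Lbar_integrand. now rewrite <- den_opp, Ropp_involutive. Qed.

Lemma continuous_Lbar_integrand θ w : in_Theta θ -> continuous (Lbar_integrand σ κ θ) w.
Proof.
  intros Hθ. apply (Cinf_param_continuous in_Theta); [|exact Hθ].
  now apply Cinf_param_Lbar_integrand.
Qed.

Lemma Lbar_blows_up : exists m, 0 < m /\ forall ε, 0 < ε <= 1/2 ->
  m / (2 * ε) <= Lbar σ κ (1 - ε) /\ m / (2 * ε) <= Lbar σ κ (- (1 - ε)).
Proof.
  pose proof PI_RGT_0. pose proof PI2_1.
  destruct (g_y_bounds σ κ κ_summable σ_pos kappa_nonzero) as [m [M [[Hm HmM] Hg]]].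
  exists m. split; [exact Hm|]. intros ε Hε. split; rewrite Lbar_eq.
  - apply (RInt_inv_den_ge m M (g_y σ κ) cos (PI - ε) ε); auto; try lra.
    + intros w _. apply COS_bound.
    + intros w Hw. apply cos_window_pi; lra.
    + intros w _. apply continuous_Lbar_integrand. unfold in_Theta; lra.
  - unfold param_integral.
    rewrite (RInt_ext _ (fun w => g_y σ κ w / den (1 - ε) (- cos w)))
      by (intros w _; apply Lbar_integrand_opp).
    apply (RInt_inv_den_ge m M (g_y σ κ) (fun w => - cos w) 0 ε); auto; try lra.
    + intros w _. pose proof (COS_bound w). lra.
    + intros w Hw. apply cos_window_0; lra.
    + intros w _. apply (continuous_ext (Lbar_integrand σ κ (- (1 - ε)))).
      * intros x. apply Lbar_integrand_opp.
      * apply continuous_Lbar_integrand. unfold in_Theta; lra.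
Qed.

Lemma Lbar_min_exists :
  exists θ, in_Theta θ /\ forall t, in_Theta t -> Lbar σ κ θ <= Lbar σ κ t.
Proof.
  destruct Lbar_blows_up as [m [Hm Hblow]].
  set (K := Rabs (Lbar σ κ 0) + 1).
  assert (HK : 0 < K) by (pose proof (Rabs_pos (Lbar σ κ 0)); unfold K; lra).
  set (e0 := Rmin (1/2) (m / (2 * K))).
  assert (He0 : 0 < e0 <= 1/2)
    by (split; [apply Rmin_glb_lt; [lra|apply Rdiv_lt_0_compat; lra]|apply Rmin_l]).
  assert (Hbig : forall ε, 0 < ε <= e0 ->
            Lbar σ κ 0 <= Lbar σ κ (1 - ε) /\ Lbar σ κ 0 <= Lbar σ κ (- (1 - ε))).
  { intros ε Hε. destruct (Hblow ε ltac:(lra)) as [H1 H2].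
    assert (Hε' : ε <= m / (2 * K)) by (eapply Rle_trans; [apply Hε|apply Rmin_r]).
    assert (K <= m / (2 * ε)).
    { apply Rle_div_r; [lra|]. apply Rle_div_r in Hε'; [|lra]. lra. }
    pose proof (Rle_abs (Lbar σ κ 0)). unfold K in *. lra. }
  apply (ex_min_of_interval (Lbar σ κ) in_Theta (- (1 - e0)) (1 - e0) 0); [lra| |].
  - intros x Hx. assert (Hxθ : in_Theta x) by (unfold in_Theta; lra). split; [exact Hxθ|].
    apply continuity_pt_filterlim, (ex_derive_continuous (Lbar σ κ)).
    eexists. now apply is_derive_Lbar.
  - intros t Ht Hout. unfold in_Theta in Ht. destruct Hout.
    + destruct (Hbig (1 + t)) as [_ Hlow]; [lra|]. now replace t with (- (1 - (1 + t))) by ring.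
    + destruct (Hbig (1 - t)) as [Hlow _]; [lra|]. now replace t with (1 - (1 - t)) by ring.
Qed.

Lemma Lbar_min_in_Theta0 θ : in_Theta θ ->
  (forall t, in_Theta t -> Lbar σ κ θ <= Lbar σ κ t) -> Theta0 σ κ 1 θ.
Proof.
  intros Hθ Hmin. split; [exact Hθ|]. apply f_est_eq_0_iff; [exact κ_summable|lra|exact Hθ|].
  enough (-2 * f_re_integral σ κ 1 θ = 0) by lra.
  apply (is_derive_local_min (Lbar σ κ) (-1) 1 θ); [exact Hθ| |now apply is_derive_Lbar].
  intros x Hx. now apply Hmin.
Qed.

End Proposition.

Theorem proposition4p4 (sigma2 : R) (kappa : nat -> R) :
  0 < sigma2 ->
  kappa 0%nat = 1 ->
  ex_series (fun s => Rabs (kappa s)) ->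
  (forall z : C, Cmod z <= 1 -> kappa_fun kappa z <> RtoC 0) ->
  (forall beta : R, 0 <= beta <= 1 ->
     smooth_on_Theta (fun theta => f_est sigma2 kappa theta beta) /\
     (exists theta, Theta0 sigma2 kappa beta theta) /\
     compact (Theta0 sigma2 kappa beta)) /\
  (forall theta : R, in_Theta theta ->
     (forall t : R, in_Theta t -> Lbar sigma2 kappa theta <= Lbar sigma2 kappa t) ->
     Theta0 sigma2 kappa 1 theta) /\
  (exists theta : R, in_Theta theta /\
     forall t : R, in_Theta t -> Lbar sigma2 kappa theta <= Lbar sigma2 kappa t).
Proof.
  intros Hσ _ Hκ Hnz. split; [|split].
  - intros β Hβ. split; [|split].
    + now apply smooth_f_est.
    + now apply Theta0_nonempty.
    + now apply Theta0_compact.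
  - intros θ Hθ Hmin. now apply Lbar_min_in_Theta0.
  - now apply Lbar_min_exists.
Qed.
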